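(* Under the standing setup, define $$Y^{1+}_{MOB}=\frac{\mathbb E[\min\{Y_N-\underline Y(1-X_N),\,\overline Y X_N\}]}{\mathbb E[X]},\qquad Y^{0-}_{MOB}=\frac{\mathbb E[\max\{Y_N-\overline Y X_N,\,\underline Y(1-X_N)\}]}{1-\mathbb E[X]},$$ $$Y^{1-}_{MOB}=\frac{\mathbb E[\max\{Y_N-\overline Y(1-X_N),\,\underline Y X_N\}]}{\mathbb E[X]},\qquad Y^{0+}_{MOB}=\frac{\mathbb E[\min\{Y_N-\underline Y X_N,\,\overline Y(1-X_N)\}]}{1-\mathbb E[X]}.$$ Then $Y^1\in[Y^{1-}_{MOB},Y^{1+}_{MOB}]$ and $Y^0\in[Y^{0-}_{MOB},Y^{0+}_{MOB}]$, and these bounds are sharp (absent additional information).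
   Context: Let $(X,Y,N)$ be a random triple with $X\in\{0,1\}$, $Y$ real-valued, $N$ taking values in a finite set $\mathcal N$. Write $p_n=\Pr(N=n)$, $X_n=\mathbb E[X\mid N=n]$, $Y_n=\mathbb E[Y\mid N=n]$, and $X_N=\mathbb E[X\mid N]$, $Y_N=\mathbb E[Y\mid N]$; expectations of functions of $(X_N,Y_N)$ are sums over $n$ weighted by $p_n$. Assume some $n$ has $p_n>0$ and $X_n\in(0,1)$. Fix reals $\underline Y\le\overline Y$ and assume $\mathbb E[Y\mid X=x,N=n]\in[\underline Y,\overline Y]$ whenever $\Pr(X=x,N=n)>0$ (standing bound). $Y^x=\mathbb E[Y\mid X=x]$. The observed data are $(p_n,X_n,Y_n)_{n\in\mathcal N}$. Sharpness: an interval is a sharp bound for a parameter if the parameter lies in it for every joint distribution satisfying the standing assumptions, and for every value $v$ in the interval there is a joint distribution of $(X,Y,N)$ with the same observed $(p_n,X_n,Y_n)_n$, satisfying the standing bound, for which the parameter equals $v$. *)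

From mathcomp Require Import all_boot all_order all_algebra.
Set Implicit Arguments. Unset Strict Implicit. Unset Printing Implicit Defensive.
Import Order.TTheory GRing.Theory Num.Theory.
Local Open Scope ring_scope.

Section Defs.
Variables (R : realFieldType) (T : finType).

(* (p, px) describes a legitimate law of (X, N). *)
Definition law_XN (p px : T -> R) : Prop :=
  (forall n, 0 <= p n) /\ \sum_(n : T) p n = 1 /\ (forall n, 0 <= px n <= 1).

Definition overlap (p px : T -> R) : Prop :=
  exists n, 0 < p n /\ 0 < px n < 1.

(* standing bound: E[Y|X=x,N=n] in [Ylo,Yhi] whenever Pr(X=x,N=n) > 0 *)
Definition standing_bound (Ylo Yhi : R) (p px m1 m0 : T -> R) : Prop :=
  forall n, (0 < p n * px n -> Ylo <= m1 n <= Yhi) /\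
            (0 < p n * (1 - px n) -> Ylo <= m0 n <= Yhi).

(* Y_n = E[Y | N = n] *)
Definition Ycond (px m1 m0 : T -> R) (n : T) : R :=
  px n * m1 n + (1 - px n) * m0 n.

Definition EN (p : T -> R) (f : T -> R) : R := \sum_(n : T) p n * f n.

Definition EX (p px : T -> R) : R := EN p px.

(* Y^1 = E[Y | X = 1] and Y^0 = E[Y | X = 0] *)
Definition Y1 (p px m1 : T -> R) : R :=
  (\sum_(n : T) p n * px n * m1 n) / EX p px.
Definition Y0 (p px m0 : T -> R) : R :=
  (\sum_(n : T) p n * (1 - px n) * m0 n) / (1 - EX p px).

Definition Y1plus (Ylo Yhi : R) (p px Yn : T -> R) : R :=
  EN p (fun n => Num.min (Yn n - Ylo * (1 - px n)) (Yhi * px n)) / EX p px.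
Definition Y0minus (Ylo Yhi : R) (p px Yn : T -> R) : R :=
  EN p (fun n => Num.max (Yn n - Yhi * px n) (Ylo * (1 - px n))) / (1 - EX p px).
Definition Y1minus (Ylo Yhi : R) (p px Yn : T -> R) : R :=
  EN p (fun n => Num.max (Yn n - Yhi * (1 - px n)) (Ylo * px n)) / EX p px.
Definition Y0plus (Ylo Yhi : R) (p px Yn : T -> R) : R :=
  EN p (fun n => Num.min (Yn n - Ylo * px n) (Yhi * (1 - px n))) / (1 - EX p px).

End Defs.

(* Within a cell [N = n] with treated share [x] and mean [y], the treated mass
   [x * E[Y|X=1,N=n]] is constrained exactly by [Ylo x <= . <= Yhi x] and
   [Ylo (1-x) <= y - . <= Yhi (1-x)], i.e. it ranges over the interval
   [[cell_lo x y, cell_hi x y]], and every point of that interval is realized by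
   admissible conditional means reproducing [y].  Since [Y^1] is the
   [p]-weighted sum of treated masses divided by [E[X]], the bounds follow by
   summation, and sharpness by moving all masses simultaneously along the
   segment from the lower to the upper endpoints.  [Y^0] is [Y^1] for the
   relabelled treatment [1 - X]. *)

From mathcomp Require Import all_boot all_order all_algebra.
From mathcomp Require Import ring lra.
Import Order.TTheory GRing.Theory Num.Theory.
Set Implicit Arguments. Unset Strict Implicit. Unset Printing Implicit Defensive.

Local Open Scope ring_scope.

Section Cell.
Variables (R : realFieldType) (Ylo Yhi : R).

Definition cell_lo (x y : R) : R := Num.max (y - Yhi * (1 - x)) (Ylo * x).
Definition cell_hi (x y : R) : R := Num.min (y - Ylo * (1 - x)) (Yhi * x).

Definition bounded_if_pos (w m : R) : Prop := 0 < w -> Ylo <= m <= Yhi.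

Lemma bounded_if_pos_scale {w m : R} :
  0 <= w -> bounded_if_pos w m -> Ylo * w <= w * m <= Yhi * w.
Proof.
rewrite le0r => /orP[/eqP-> _|w_gt0 /(_ w_gt0)/andP[lo_m m_hi]].
  by rewrite !mulr0 mul0r lexx.
by rewrite ![_ * w]mulrC !ler_pM2l ?lo_m.
Qed.

Lemma cell_mass_between (x m1 m0 : R) :
  0 <= x <= 1 -> bounded_if_pos x m1 -> bounded_if_pos (1 - x) m0 ->
  cell_lo x (x * m1 + (1 - x) * m0) <= x * m1
    <= cell_hi x (x * m1 + (1 - x) * m0).
Proof.
move=> /andP[x_ge0 x_le1] /(bounded_if_pos_scale x_ge0)/andP[? ?].
have x'_ge0 : 0 <= 1 - x by rewrite subr_ge0.
move=> /(bounded_if_pos_scale x'_ge0)/andP[? ?].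
by rewrite ge_max le_min; apply/and3P; split; [apply/andP; split|lra|]; lra.
Qed.

(* Conditional means realizing a treated mass [a] in a cell with treated share
   [x] and mean [y]; on an empty arm ([x = 0] resp. [x = 1]) the value is
   irrelevant and [Ylo] is chosen. *)
Definition split_m1 (x a : R) : R := if x == 0 then Ylo else a / x.
Definition split_m0 (x y a : R) : R :=
  if x == 1 then Ylo else (y - a) / (1 - x).

Lemma cell_split (x y a : R) :
  0 <= x <= 1 -> cell_lo x y <= a <= cell_hi x y ->
  [/\ bounded_if_pos x (split_m1 x a), bounded_if_pos (1 - x) (split_m0 x y a),
      x * split_m1 x a = a
    & x * split_m1 x a + (1 - x) * split_m0 x y a = y].
Proof.
move=> /andP[x_ge0 x_le1]; rewrite ge_max le_min.
move=> /andP[/andP[lo1 lo2] /andP[hi1 hi2]].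
have m1_mass : x * split_m1 x a = a.
  rewrite /split_m1; have [x0|x_neq0] := eqVneq x 0; last by rewrite mulrC divfK.
  by move: lo2 hi2; rewrite x0 !mulr0 mul0r => *; lra.
have m0_mass : (1 - x) * split_m0 x y a = y - a.
  rewrite /split_m0; have [x1|x_neq1] := eqVneq x 1.
    by move: lo1 hi1; rewrite x1 subrr !mulr0 mul0r => *; lra.
  by rewrite mulrC divfK // subr_eq0 eq_sym.
split=> [x_gt0|x'_gt0|//|]; last by rewrite m1_mass m0_mass; ring.
- by rewrite /split_m1 gt_eqF // ler_pdivlMr // ler_pdivrMr // lo2 hi2.
- rewrite /split_m0 ifF; last by apply/eqP=> x1; move: x'_gt0; rewrite x1 subrr ltxx.
  by rewrite ler_pdivlMr // ler_pdivrMr //; apply/andP; split; lra.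
Qed.

End Cell.

Lemma EN_intermediate (R : realFieldType) (T : finType) (w lo hi : T -> R) c :
  (forall n, 0 <= w n) -> (forall n, 0 < w n -> lo n <= hi n) ->
  EN w lo <= c <= EN w hi ->
  exists a : T -> R, (forall n, 0 < w n -> lo n <= a n <= hi n) /\ EN w a = c.
Proof.
move=> w_ge0 lo_hi /andP[lo_c c_hi].
have [s /andP[s_ge0 s_le1] c_def] :
    exists2 s, 0 <= s <= 1 & c = EN w lo + s * (EN w hi - EN w lo).
  have [eq_ends|neq] := eqVneq (EN w lo) (EN w hi).
    by exists 0; rewrite ?lexx ?ler01 // mul0r addr0; lra.
  have gap_gt0 : 0 < EN w hi - EN w lo.
    by rewrite subr_gt0 lt_neqAle neq; apply: le_trans c_hi.
  exists ((c - EN w lo) / (EN w hi - EN w lo)); last by rewrite divfK ?gt_eqF //; ring.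
  by rewrite divr_ge0 ?subr_ge0 ?ler_pdivrMr //=; lra.
exists (fun n => lo n + s * (hi n - lo n)); split.
  move=> n /lo_hi; rewrite -subr_ge0 => gap_ge0.
  have := mulr_ge0 s_ge0 gap_ge0.
  by have := mulr_ge0 (ltac:(lra) : 0 <= 1 - s) gap_ge0; nra.
rewrite c_def /EN -sumrB mulr_sumr -big_split /=.
by apply: eq_bigr => n _; ring.
Qed.

Section Treated.
Variables (R : realFieldType) (T : finType) (Ylo Yhi : R).
Variables (p px : T -> R).
Hypotheses (law : law_XN p px) (overlap_px : overlap p px).

Lemma EX_gt0 : 0 < EX p px.
Proof.
have [p_ge0 [_ px01]] := law; have [n0 [pn0 /andP[px0_gt0 _]]] := overlap_px.
rewrite /EX /EN (bigD1 n0) //= ltr_pwDl ?mulr_gt0 // sumr_ge0 // => n _.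
by rewrite mulr_ge0 //; case/andP: (px01 n).
Qed.

Lemma standing_boundE (m1 m0 : T -> R) :
  standing_bound Ylo Yhi p px m1 m0 <->
  forall n, 0 < p n ->
    bounded_if_pos Ylo Yhi (px n) (m1 n) /\ bounded_if_pos Ylo Yhi (1 - px n) (m0 n).
Proof.
have [p_ge0 [_ px01]] := law.
split=> [sb n pn_gt0 | cell n].
  by split=> ?; [apply: (sb n).1 | apply: (sb n).2]; rewrite mulr_gt0.
have /andP[px_ge0 px_le1] := px01 n.
rewrite !mulr_ge0_gt0 ?p_ge0 ?subr_ge0 //.
by split=> /andP[pn_gt0]; [apply: (cell n pn_gt0).1 | apply: (cell n pn_gt0).2].
Qed.

Lemma Y1E (m1 : T -> R) : Y1 p px m1 = EN p (fun n => px n * m1 n) / EX p px.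
Proof. by congr (_ / _); apply: eq_bigr => n _; rewrite mulrA. Qed.

Variables (m1 m0 Yn : T -> R).
Hypotheses (bound : standing_bound Ylo Yhi p px m1 m0)
  (Yn_def : Yn =1 Ycond px m1 m0).

Lemma cell_mass_Ycond n : 0 < p n ->
  cell_lo Ylo Yhi (px n) (Yn n) <= px n * m1 n <= cell_hi Ylo Yhi (px n) (Yn n).
Proof.
have [_ [_ px01]] := law; rewrite Yn_def.
by move=> /(standing_boundE m1 m0).1-/(_ bound)[]; apply: cell_mass_between.
Qed.

Lemma Y1_between : Y1minus Ylo Yhi p px Yn <= Y1 p px m1 <= Y1plus Ylo Yhi p px Yn.
Proof.
have [p_ge0 _] := law; have EX_ge0 := ltW EX_gt0.
rewrite Y1E; apply/andP; split; apply: ler_wpM2r; rewrite ?invr_ge0 //;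
  apply: ler_sum => n _; have := p_ge0 n;
  rewrite le0r => /orP[/eqP->|/cell_mass_Ycond/andP[]];
  by rewrite ?mul0r // => *; rewrite ler_wpM2l.
Qed.

Lemma Y1_sharp v :
  Y1minus Ylo Yhi p px Yn <= v <= Y1plus Ylo Yhi p px Yn ->
  exists m1' m0' : T -> R,
    [/\ standing_bound Ylo Yhi p px m1' m0',
        forall n, 0 < p n -> Ycond px m1' m0' n = Yn n
      & Y1 p px m1' = v].
Proof.
have [p_ge0 [_ px01]] := law; have EX_pos := EX_gt0.
rewrite ler_pdivrMr // ler_pdivlMr // => v_range.
have [a [a_cell a_sum]] : exists a : T -> R,
    (forall n, 0 < p n ->
       cell_lo Ylo Yhi (px n) (Yn n) <= a n <= cell_hi Ylo Yhi (px n) (Yn n)) /\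
    EN p a = v * EX p px.
  apply: EN_intermediate v_range => // n /cell_mass_Ycond/andP[lo_mass mass_hi].
  exact: le_trans mass_hi.
have split_n n (pn_gt0 : 0 < p n) := cell_split (px01 n) (a_cell n pn_gt0).
exists (fun n => split_m1 Ylo (px n) (a n)).
exists (fun n => split_m0 Ylo (px n) (Yn n) (a n)).
split=> [|n /split_n[] //|].
  by apply/standing_boundE => n /split_n[].
rewrite Y1E -[v](mulfK (lt0r_neq0 EX_pos)) -a_sum; congr (_ / _).
apply: eq_bigr => n _; have := p_ge0 n; rewrite le0r => /orP[/eqP->|].
  by rewrite !mul0r.
by case/split_n=> _ _ ->.
Qed.

End Treated.

Section Untreated.
Variables (R : realFieldType) (T : finType) (Ylo Yhi : R) (p px : T -> R).
Hypothesis law : law_XN p px.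

Definition compl_share (n : T) : R := 1 - px n.

Lemma compl_shareK n : 1 - compl_share n = px n.
Proof. by rewrite /compl_share opprB addrC subrK. Qed.

Lemma law_XN_compl : law_XN p compl_share.
Proof.
have [? [? px01]] := law; split=> //; split=> // n.
by have := px01 n; rewrite /compl_share => /andP[? ?]; apply/andP; split; lra.
Qed.

Lemma overlap_compl : overlap p px -> overlap p compl_share.
Proof.
move=> [n [pn_gt0 /andP[? ?]]]; exists n; split=> //.
by rewrite /compl_share; apply/andP; split; lra.
Qed.

Lemma standing_bound_compl (m1 m0 : T -> R) :
  standing_bound Ylo Yhi p px m1 m0 <-> standing_bound Ylo Yhi p compl_share m0 m1.
Proof.
split=> sb n; have [bound1 bound0] := sb n.
  by split; rewrite ?compl_shareK.
by rewrite compl_shareK in bound0.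
Qed.

Lemma Ycond_compl (m1 m0 : T -> R) : Ycond compl_share m0 m1 =1 Ycond px m1 m0.
Proof. by move=> n; rewrite /Ycond /compl_share; ring. Qed.

Lemma EX_compl : EX p compl_share = 1 - EX p px.
Proof.
have [_ [p_sum _]] := law.
by rewrite /EX /EN -p_sum -sumrB; apply: eq_bigr => n _; rewrite /compl_share; ring.
Qed.

Lemma Y1_compl (m : T -> R) : Y1 p compl_share m = Y0 p px m.
Proof. by rewrite /Y1 /Y0 EX_compl. Qed.

Lemma Y1minus_compl (Yn : T -> R) :
  Y1minus Ylo Yhi p compl_share Yn = Y0minus Ylo Yhi p px Yn.
Proof.
rewrite /Y1minus /Y0minus EX_compl; congr (_ / _); apply: eq_bigr => n _.
by rewrite compl_shareK.
Qed.

Lemma Y1plus_compl (Yn : T -> R) :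
  Y1plus Ylo Yhi p compl_share Yn = Y0plus Ylo Yhi p px Yn.
Proof.
rewrite /Y1plus /Y0plus EX_compl; congr (_ / _); apply: eq_bigr => n _.
by rewrite compl_shareK.
Qed.

End Untreated.

Theorem proposition2 (R : realFieldType) (T : finType) (Ylo Yhi : R)
    (p px m1 m0 : T -> R) :
  Ylo <= Yhi ->
  law_XN p px ->
  overlap p px ->
  standing_bound Ylo Yhi p px m1 m0 ->
  let Yn := Ycond px m1 m0 in
  (* validity of the bounds *)
  (Y1minus Ylo Yhi p px Yn <= Y1 p px m1 <= Y1plus Ylo Yhi p px Yn /\
   Y0minus Ylo Yhi p px Yn <= Y0 p px m0 <= Y0plus Ylo Yhi p px Yn) /\
  (* sharpness for Y^1 *)
  (forall v, Y1minus Ylo Yhi p px Yn <= v <= Y1plus Ylo Yhi p px Yn ->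
     exists m1' m0' : T -> R,
       standing_bound Ylo Yhi p px m1' m0' /\
       (forall n, 0 < p n -> Ycond px m1' m0' n = Yn n) /\
       Y1 p px m1' = v) /\
  (* sharpness for Y^0 *)
  (forall v, Y0minus Ylo Yhi p px Yn <= v <= Y0plus Ylo Yhi p px Yn ->
     exists m1' m0' : T -> R,
       standing_bound Ylo Yhi p px m1' m0' /\
       (forall n, 0 < p n -> Ycond px m1' m0' n = Yn n) /\
       Y0 p px m0' = v).
Proof.
move=> _ law ov bound Yn.
have law' := law_XN_compl law; have ov' := overlap_compl ov.
have bound' := (standing_bound_compl Ylo Yhi p px m1 m0).1 bound.
have Yn' : Yn =1 Ycond (compl_share px) m0 m1 by move=> n; rewrite Ycond_compl.
have treated := Y1_sharp law ov bound (frefl Yn).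
have untreated := Y1_sharp law' ov' bound' Yn'.
rewrite -(Y1minus_compl Ylo Yhi law) -(Y1plus_compl Ylo Yhi law) -(Y1_compl law).
split; first by split; [apply: (Y1_between law ov bound) | apply: (Y1_between law' ov' bound')].
split=> v.
  by move=> /treated[m1' [m0' [bound1 Ycond1 Y1v]]]; exists m1', m0'.
move=> /untreated[m0' [m1' [bound1 Ycond1 Y1v]]]; exists m1', m0'.
split; first exact/standing_bound_compl.
by split=> [n /Ycond1 <-|]; rewrite ?Ycond_compl -?(Y1_compl law).
Qed.
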